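(* Let $\tilde A\in\widetilde{SL}(2,\mathbb R)_+$ and let $a<b$ be fixed points of $\tilde A$ such that $\tilde A(x)>x$ for all $x\in U:=(a,b)$. Then every other interval $U'=(a',b')$ with the same property ($a'<b'$ fixed points of $\tilde A$ with $\tilde A(x)>x$ for all $x\in U'$) is of the form $U'=(a+k\pi,b+k\pi)$ for some $k\in\mathbb Z$. Moreover, the projective curves $U/\langle\tilde A\rangle$ and $U'/\langle\tilde A\rangle$ are isomorphic.
   Context: Let $\pi:\mathbb R\to\mathbb{RP}^1$, $\pi(t)=[\cos t:\sin t]$, and $\bar\pi(t)=(\cos t,\sin t)\in S^1$; $SL(2,\mathbb R)$ acts on $S^1$ by $A\cdot v=Av/\|Av\|$. The universal cover $\widetilde{SL}(2,\mathbb R)$ is realized as the group of diffeomorphisms $\tilde A$ of $\mathbb R$ for which there exists $A\in SL(2,\mathbb R)$ with $\bar\pi\circ\tilde A=A\cdot\bar\pi$. $\widetilde{SL}(2,\mathbb R)_+$ denotes the set of $\tilde A\in\widetilde{SL}(2,\mathbb R)$ such that $\tilde A(x)>x$ for at least one $x\in\mathbb R$. Intervals of $\mathbb R$ carry the projective structure pulled back from $\mathbb{RP}^1$ by $\pi$; elements of $\widetilde{SL}(2,\mathbb R)$ act by projective maps, and $\langle\tilde A\rangle$ acts freely and properly on $U$, so $U/\langle\tilde A\rangle$ is a closed projective curve. *)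

From Stdlib Require Import Reals ZArith.
From Coquelicot Require Import Coquelicot.
Open Scope R_scope.

Definition smooth (f : R -> R) : Prop := forall (n : nat) (x : R), ex_derive_n f n x.

Definition diffeo (f : R -> R) : Prop :=
  exists g : R -> R, (forall x, g (f x) = x) /\ (forall y, f (g y) = y)
                     /\ smooth f /\ smooth g.

(* The action of A = [[p q];[r s]] in SL(2,R) on S^1 : v |-> A v / ||A v||,
   composed with pibar t = (cos t, sin t):  pibar (f t) = A . pibar t. *)
Definition lifts_SL2 (f : R -> R) (p q r s : R) : Prop :=
  p * s - q * r = 1 /\
  forall t : R,
    let u := p * cos t + q * sin t in
    let v := r * cos t + s * sin t in
    cos (f t) = u / sqrt (u ^ 2 + v ^ 2) /\ sin (f t) = v / sqrt (u ^ 2 + v ^ 2).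

(* f is an element of the universal cover  ~SL(2,R)  realized as diffeos of R *)
Definition in_SL2tilde (f : R -> R) : Prop :=
  diffeo f /\ exists p q r s : R, lifts_SL2 f p q r s.

Definition in_SL2tilde_plus (f : R -> R) : Prop :=
  in_SL2tilde f /\ exists x : R, f x > x.

(* x and y lie in the same <f>-orbit: y = f^n x for some integer n *)
Definition same_orbit (f : R -> R) (x y : R) : Prop :=
  exists n : nat, y = Nat.iter n f x \/ x = Nat.iter n f y.

(* phi is projective near x (for the structure pulled back from RP^1 by pi):
   on a neighbourhood of x inside (a,b), pi (phi t) = [M] . pi t for some
   M = [[p q];[r s]] in GL(2,R); equality in RP^1 = vanishing of the 2x2 determinant. *)
Definition loc_projective (phi : R -> R) (a b x : R) : Prop :=
  exists p q r s : R, p * s - q * r <> 0 /\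
  exists eps : R, eps > 0 /\
    forall t : R, a < t < b -> Rabs (t - x) < eps ->
      (p * cos t + q * sin t) * sin (phi t) - (r * cos t + s * sin t) * cos (phi t) = 0.

(* The closed projective curves (a,b)/<f> and (a',b')/<f> are isomorphic:
   there is a continuous, locally projective surjection phi : (a,b) -> (a',b')
   which induces a bijection of <f>-orbits (i.e. a lift to the universal covers
   of a projective isomorphism of the quotient curves). *)
Definition quotient_iso (f : R -> R) (a b a' b' : R) : Prop :=
  exists phi : R -> R,
    (forall x, a < x < b -> a' < phi x < b') /\
    (forall y, a' < y < b' -> exists x, a < x < b /\ phi x = y) /\
    (forall x, a < x < b -> continuity_pt phi x) /\
    (forall x, a < x < b -> loc_projective phi a b x) /\
    (forall x y, a < x < b -> a < y < b ->
        (same_orbit f x y <-> same_orbit f (phi x) (phi y))).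

From Stdlib Require Import Reals ZArith Lra Psatz.
From Coquelicot Require Import Coquelicot.
Open Scope R_scope.

(* Let A lift M in SL(2,R) and have a fixed point. The displacement A t - t
   never reaches +-PI: there (cos t, sin t) would be an eigenvector of M with a
   negative eigenvalue, while the fixed point gives one with a positive
   eigenvalue, impossible when det M = 1. Hence A commutes with translation by
   PI, and A t - t has the sign of the quadratic form
   Q(t) = det((cos t, sin t), M (cos t, sin t)) = |M (cos t, sin t)| sin (A t - t).
   A quadratic form on the circle vanishing at t1 < t2 < t1 + PI is a multiple
   of sin (t - t1) sin (t - t2), so it cannot be positive just after both t1
   and t2. Thus two intervals of the statement whose left endpoints are less
   than PI apart coincide, and the translation by a suitable multiple of PI,
   which is projective and commutes with A, maps U onto U'. *)

Definition positive_interval (f : R -> R) (a b : R) : Prop :=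
  a < b /\ f a = a /\ f b = b /\ forall x, a < x < b -> f x > x.

Lemma positive_interval_same_left f a b b' :
  positive_interval f a b -> positive_interval f a b' -> b' = b.
Proof.
  intros [Hab [_ [Hb HU]]] [Hab' [_ [Hb' HU']]].
  destruct (Rtotal_order b b') as [Hlt|[Heq|Hgt]].
  - pose proof (HU' b ltac:(lra)). lra.
  - now symmetry.
  - pose proof (HU b' ltac:(lra)). lra.
Qed.

Lemma positive_interval_translate f c a b :
  (forall x, f (x + c) = f x + c) ->
  positive_interval f a b -> positive_interval f (a + c) (b + c).
Proof.
  intros Hc [Hab [Ha [Hb HU]]].
  repeat split; [lra | rewrite Hc, Ha; reflexivity | rewrite Hc, Hb; reflexivity |].
  intros x Hx. replace x with ((x - c) + c) by ring.
  rewrite Hc. pose proof (HU (x - c) ltac:(lra)). lra.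
Qed.

Lemma translate_Z_multiple f c :
  (forall x, f (x + c) = f x + c) ->
  forall (k : Z) x, f (x + IZR k * c) = f x + IZR k * c.
Proof.
  intros Hc k. induction k as [|k IH|k IH] using Z.peano_ind; intro x.
  - simpl. rewrite Rmult_0_l, !Rplus_0_r. reflexivity.
  - rewrite succ_IZR. replace (x + (IZR k + 1) * c) with ((x + c) + IZR k * c) by ring.
    rewrite IH, Hc. ring.
  - rewrite <- Z.sub_1_r, minus_IZR.
    replace (x + (IZR k - 1) * c) with ((x - c) + IZR k * c) by ring.
    pose proof (Hc (x - c)) as E. replace (x - c + c) with x in E by ring.
    rewrite IH. lra.
Qed.

Lemma exists_Z_translate_into c a x :
  0 < c -> exists k : Z, a <= x + IZR k * c < a + c.
Proof.
  intros Hc. destruct (base_Int_part ((x - a) / c)) as [Hlo Hhi].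
  exists (- Int_part ((x - a) / c))%Z. rewrite opp_IZR.
  set (n := IZR (Int_part _)) in *.
  assert (E : (x - a) / c * c = x - a) by (field; lra).
  split; nra.
Qed.

Lemma quotient_iso_translate f a b (k : Z) :
  (forall x, f (x + IZR k * PI) = f x + IZR k * PI) ->
  quotient_iso f a b (a + IZR k * PI) (b + IZR k * PI).
Proof.
  intros Hk. set (c := IZR k * PI) in *.
  assert (Hiter : forall n x, Nat.iter n f (x + c) = Nat.iter n f x + c).
  { induction n as [|n IH]; intro x; [reflexivity|]. simpl. rewrite IH. apply Hk. }
  exists (fun x => x + c). repeat split.
  - lra.
  - lra.
  - intros y Hy. exists (y - c). split; [lra | ring].
  - intros x _. apply (continuity_pt_plus (fun x => x) (fun _ => c)).
    + apply continuity_pt_id.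
    + apply continuity_pt_const. intros ? ?; reflexivity.
  - intros x _. exists 1, 0, 0, 1. split; [lra|]. exists 1. split; [lra|].
    intros t _ _.
    replace ((1 * cos t + 0 * sin t) * sin (t + c) - (0 * cos t + 1 * sin t) * cos (t + c))
      with (sin ((t + c) - t)) by (rewrite sin_minus; ring).
    replace (t + c - t) with c by ring.
    apply sin_eq_0_1. now exists k.
  - intros [n [Hn|Hn]]; exists n; [left|right]; now rewrite Hiter, Hn.
  - intros [n [Hn|Hn]]; exists n; [left|right]; rewrite Hiter in Hn; lra.
Qed.

Lemma smooth_continuity f : smooth f -> continuity f.
Proof.
  intros Hf x. apply continuity_pt_filterlim.
  exact (@ex_derive_continuous R_AbsRing R_NormedModule f x (Hf 1%nat x)).
Qed.

Lemma continuity_trapped f x0 lo hi :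
  continuity f -> lo < f x0 < hi ->
  (forall t, f t <> lo) -> (forall t, f t <> hi) -> forall t, lo < f t < hi.
Proof.
  intros Hf H0 Hlo Hhi t.
  destruct (Rlt_or_le lo (f t)) as [Hl|Hl]; [destruct (Rlt_or_le (f t) hi) as [Hh|Hh]|].
  - now split.
  - destruct (IVT_gen f x0 t hi Hf) as [c [_ Hc]];
      [unfold Rmin, Rmax; destruct Rle_dec; lra | now destruct (Hhi c)].
  - destruct (IVT_gen f x0 t lo Hf) as [c [_ Hc]];
      [unfold Rmin, Rmax; destruct Rle_dec; lra | now destruct (Hlo c)].
Qed.

Lemma cos_sin_inj x y : -PI < x < PI -> -PI < y < PI ->
  cos x = cos y -> sin x = sin y -> x = y.
Proof.
  intros Hx Hy Hc Hs.
  assert (C : cos (x - y) = 1).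
  { rewrite cos_minus, Hc, Hs. pose proof (sin2_cos2 y). unfold Rsqr in *. lra. }
  assert (S : sin ((x - y) / 2) = 0).
  { pose proof (cos_2a_sin ((x - y) / 2)) as D.
    replace (2 * ((x - y) / 2)) with (x - y) in D by field. nra. }
  destruct (Rtotal_order ((x - y) / 2) 0) as [Hl|[He|Hg]].
  - pose proof (sin_lt_0_var ((x - y) / 2)). lra.
  - lra.
  - pose proof (sin_gt_0 ((x - y) / 2)). lra.
Qed.

Lemma cos_sin_sq_neq0 t : cos t ^ 2 + sin t ^ 2 <> 0.
Proof. rewrite <- !Rsqr_pow2, Rplus_comm, sin2_cos2. exact R1_neq_R0. Qed.

Lemma eigenvalue_charpoly p q r s x y l : x ^ 2 + y ^ 2 <> 0 ->
  p * x + q * y = l * x -> r * x + s * y = l * y -> (p - l) * (s - l) - q * r = 0.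
Proof.
  intros Hxy Ex Ey. set (d := (p - l) * (s - l) - q * r).
  assert (Dx : d * x = 0).
  { replace (d * x) with ((s - l) * ((p * x + q * y) - l * x) - q * ((r * x + s * y) - l * y))
      by (unfold d; ring).
    rewrite Ex, Ey. ring. }
  assert (Dy : d * y = 0).
  { replace (d * y) with ((p - l) * ((r * x + s * y) - l * y) - r * ((p * x + q * y) - l * x))
      by (unfold d; ring).
    rewrite Ex, Ey. ring. }
  apply (Rmult_eq_reg_r (x ^ 2 + y ^ 2)); [|exact Hxy].
  replace (d * (x ^ 2 + y ^ 2)) with (x * (d * x) + y * (d * y)) by ring.
  rewrite Dx, Dy. ring.
Qed.

Lemma SL2_eigenvalues_same_sign p q r s x1 y1 l1 x2 y2 l2 : p * s - q * r = 1 ->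
  x1 ^ 2 + y1 ^ 2 <> 0 -> p * x1 + q * y1 = l1 * x1 -> r * x1 + s * y1 = l1 * y1 ->
  x2 ^ 2 + y2 ^ 2 <> 0 -> p * x2 + q * y2 = l2 * x2 -> r * x2 + s * y2 = l2 * y2 ->
  0 < l1 * l2.
Proof.
  intros Hdet H1 E1 F1 H2 E2 F2.
  pose proof (eigenvalue_charpoly _ _ _ _ _ _ _ H1 E1 F1) as C1.
  pose proof (eigenvalue_charpoly _ _ _ _ _ _ _ H2 E2 F2) as C2.
  assert (T1 : (p + s) * l1 = 1 + l1 ^ 2) by nra.
  assert (T2 : (p + s) * l2 = 1 + l2 ^ 2) by nra.
  assert (P : 0 < (p + s) ^ 2 * (l1 * l2)).
  { replace ((p + s) ^ 2 * (l1 * l2)) with (((p + s) * l1) * ((p + s) * l2)) by ring.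
    rewrite T1, T2. nra. }
  apply Rnot_le_lt. intro Hle. pose proof (pow2_ge_0 (p + s)). nra.
Qed.

Definition quadratic_on_circle (al be ga t : R) : R :=
  al * cos t ^ 2 + be * cos t * sin t + ga * sin t ^ 2.

Lemma quadratic_on_circle_root_factor al be ga th :
  quadratic_on_circle al be ga th = 0 ->
  forall t, quadratic_on_circle al be ga t =
    sin (t - th) * ((be * cos th + (ga - al) * sin th) * cos t
                    + ((ga - al) * cos th - be * sin th) * sin t).
Proof.
  intros H t. pose proof (sin2_cos2 th) as P. pose proof (sin2_cos2 t) as Pt.
  rewrite !Rsqr_pow2 in P, Pt.
  replace (quadratic_on_circle al be ga t) with
    (quadratic_on_circle al be ga t * (sin th ^ 2 + cos th ^ 2)
     - quadratic_on_circle al be ga th * (sin t ^ 2 + cos t ^ 2)) by (rewrite H, P; ring).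
  unfold quadratic_on_circle. rewrite sin_minus. ring.
Qed.

Lemma sinusoid_root_factor x y th : x * cos th + y * sin th = 0 ->
  forall t, x * cos t + y * sin t = (y * cos th - x * sin th) * sin (t - th).
Proof.
  intros H t. pose proof (sin2_cos2 th) as P. unfold Rsqr in P.
  replace (x * cos t + y * sin t) with
    ((x * cos t + y * sin t) * (sin th * sin th + cos th * cos th)
     - (x * cos th + y * sin th) * (cos t * cos th + sin t * sin th)) by (rewrite H, P; ring).
  rewrite sin_minus. ring.
Qed.

Lemma quadratic_on_circle_two_roots al be ga th1 th2 : sin (th2 - th1) <> 0 ->
  quadratic_on_circle al be ga th1 = 0 -> quadratic_on_circle al be ga th2 = 0 ->
  exists K, forall t, quadratic_on_circle al be ga t = K * sin (t - th1) * sin (t - th2).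
Proof.
  intros Hsin H1 H2.
  pose proof (quadratic_on_circle_root_factor _ _ _ _ H1) as F.
  set (x := be * cos th1 + (ga - al) * sin th1) in F.
  set (y := (ga - al) * cos th1 - be * sin th1) in F.
  assert (L2 : x * cos th2 + y * sin th2 = 0).
  { rewrite F in H2. apply Rmult_integral in H2 as [|]; [contradiction | assumption]. }
  exists (y * cos th2 - x * sin th2). intro t.
  rewrite F, (sinusoid_root_factor _ _ _ L2 t). ring.
Qed.

Section SL2Lift.

Variables (A : R -> R) (p q r s : R).
Hypothesis HA : lifts_SL2 A p q r s.
Hypothesis HAcont : continuity A.

Let u t := p * cos t + q * sin t.
Let v t := r * cos t + s * sin t.
Let N t := sqrt (u t ^ 2 + v t ^ 2).

Lemma lift_polar t : 0 < N t /\ u t = N t * cos (A t) /\ v t = N t * sin (A t).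
Proof.
  destruct HA as [Hdet Hlift]. destruct (Hlift t) as [Hc Hs]. cbv zeta in Hc, Hs.
  change (p * cos t + q * sin t) with (u t) in Hc, Hs.
  change (r * cos t + s * sin t) with (v t) in Hc, Hs.
  assert (Hpos : 0 < u t ^ 2 + v t ^ 2).
  { apply Rnot_le_lt. intro Hle.
    assert (U0 : u t = 0) by nra. assert (V0 : v t = 0) by nra.
    (* M is invertible: (cos t, sin t) = M^-1 (u t, v t) *)
    assert (Ec : cos t = s * u t - q * v t).
    { unfold u, v. rewrite <- (Rmult_1_l (cos t)) at 1. rewrite <- Hdet. ring. }
    assert (Es : sin t = p * v t - r * u t).
    { unfold u, v. rewrite <- (Rmult_1_l (sin t)) at 1. rewrite <- Hdet. ring. }
    rewrite U0, V0 in Ec, Es. apply (cos_sin_sq_neq0 t). rewrite Ec, Es. ring. }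
  assert (HN : 0 < N t) by (apply sqrt_lt_R0, Hpos).
  split; [exact HN|]. fold (N t) in Hc, Hs.
  rewrite Hc, Hs. split; field; lra.
Qed.

Lemma lift_sin_displacement t :
  quadratic_on_circle r (s - p) (- q) t = N t * sin (A t - t).
Proof.
  destruct (lift_polar t) as [_ [Hu Hv]].
  rewrite sin_minus, Rmult_minus_distr_l, <- !Rmult_assoc, <- Hu, <- Hv.
  unfold quadratic_on_circle, u, v. ring.
Qed.

Section FixedPoint.

Variable a0 : R.
Hypothesis Ha0 : A a0 = a0.

Lemma lift_no_half_turn t : cos (A t) = - cos t -> sin (A t) = - sin t -> False.
Proof.
  intros Hc Hs.
  destruct (lift_polar a0) as [P0 [U0 V0]]. destruct (lift_polar t) as [P [U V]].
  rewrite Ha0 in U0, V0. rewrite Hc in U. rewrite Hs in V.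
  unfold u, v in *.
  assert (Hneg : 0 < N a0 * - N t).
  { apply (SL2_eigenvalues_same_sign p q r s (cos a0) (sin a0) _ (cos t) (sin t));
      try apply cos_sin_sq_neq0; [exact (proj1 HA) | exact U0 | exact V0 | |];
      [rewrite U | rewrite V]; ring. }
  nra.
Qed.

Lemma lift_displacement_bound t : -PI < A t - t < PI.
Proof.
  pose proof PI_RGT_0.
  apply (continuity_trapped (fun t => A t - t) a0).
  - intro x. apply continuity_pt_minus; [apply HAcont | apply continuity_pt_id].
  - rewrite Ha0. lra.
  - intros t1 E. apply (lift_no_half_turn t1); replace (A t1) with (t1 - PI) by lra;
      [rewrite cos_minus | rewrite sin_minus]; rewrite cos_PI, sin_PI; ring.
  - intros t1 E. apply (lift_no_half_turn t1); replace (A t1) with (t1 + PI) by lra;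
      [apply neg_cos | apply neg_sin].
Qed.

Lemma lift_shift_PI t : A (t + PI) = A t + PI.
Proof.
  destruct (lift_polar t) as [P [U V]].
  destruct (lift_polar (t + PI)) as [P' [U' V']].
  assert (Nt : N (t + PI) = N t).
  { unfold N, u, v. rewrite neg_cos, neg_sin. f_equal. ring. }
  assert (Ut : u (t + PI) = - u t) by (unfold u; rewrite neg_cos, neg_sin; ring).
  assert (Vt : v (t + PI) = - v t) by (unfold v; rewrite neg_cos, neg_sin; ring).
  rewrite Nt, Ut in U'. rewrite Nt, Vt in V'.
  assert (C : cos (A (t + PI)) = - cos (A t)) by (apply (Rmult_eq_reg_l (N t)); lra).
  assert (S : sin (A (t + PI)) = - sin (A t)) by (apply (Rmult_eq_reg_l (N t)); lra).
  assert (E : A (t + PI) - (t + PI) = A t - t).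
  { apply cos_sin_inj; try apply lift_displacement_bound.
    - rewrite !cos_minus, C, neg_cos, neg_sin, S. ring.
    - rewrite !sin_minus, C, neg_cos, neg_sin, S. ring. }
  lra.
Qed.

Lemma lift_displacement_sign t :
  t < A t -> 0 < quadratic_on_circle r (s - p) (- q) t.
Proof.
  intro Ht. rewrite lift_sin_displacement.
  apply Rmult_lt_0_compat; [apply lift_polar|].
  apply sin_gt_0; [lra | apply lift_displacement_bound].
Qed.

End FixedPoint.

Lemma lift_fixed_root t : A t = t -> quadratic_on_circle r (s - p) (- q) t = 0.
Proof.
  intro Ht. rewrite lift_sin_displacement, Ht, Rminus_diag, sin_0. ring.
Qed.

Lemma positive_interval_unique_mod_PI a b a' b' :
  positive_interval A a b -> positive_interval A a' b' -> a <= a' < a + PI ->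
  a' = a /\ b' = b.
Proof.
  intros Hab Hab' [Hl Hr].
  destruct (Rle_lt_or_eq_dec a a' Hl) as [Hlt|<-];
    [exfalso | split; [reflexivity | exact (positive_interval_same_left _ _ _ _ Hab Hab')]].
  destruct Hab as [Hab [Ha [_ HU]]]. destruct Hab' as [Hab' [Ha' [_ HU']]].
  destruct (quadratic_on_circle_two_roots r (s - p) (- q) a a') as [K HK].
  - apply Rgt_not_eq, sin_gt_0; lra.
  - exact (lift_fixed_root a Ha).
  - exact (lift_fixed_root a' Ha').
  - assert (M1 : a < Rmin b a') by (apply Rmin_glb_lt; lra).
    assert (M2 : a' < Rmin b' (a + PI)) by (apply Rmin_glb_lt; lra).
    pose proof (Rmin_l b a') as Mb. pose proof (Rmin_r b a') as Ma'.
    pose proof (Rmin_l b' (a + PI)) as Mb'. pose proof (Rmin_r b' (a + PI)) as MPI.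
    set (t1 := (a + Rmin b a') / 2). set (t2 := (a' + Rmin b' (a + PI)) / 2).
    assert (Ht1 : a < t1 < Rmin b a') by (unfold t1; lra).
    assert (Ht2 : a' < t2 < Rmin b' (a + PI)) by (unfold t2; lra).
    assert (Q1 := lift_displacement_sign a Ha t1 (HU t1 ltac:(lra))).
    assert (Q2 := lift_displacement_sign a Ha t2 (HU' t2 ltac:(lra))).
    rewrite HK, Rmult_assoc in Q1, Q2.
    assert (S1a : 0 < sin (t1 - a)) by (apply sin_gt_0; lra).
    assert (S1a' : sin (t1 - a') < 0) by (apply sin_lt_0_var; lra).
    assert (S2a : 0 < sin (t2 - a)) by (apply sin_gt_0; lra).
    assert (S2a' : 0 < sin (t2 - a')) by (apply sin_gt_0; lra).
    assert (P1 : sin (t1 - a) * sin (t1 - a') < 0) by nra.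
    assert (P2 : 0 < sin (t2 - a) * sin (t2 - a')) by nra.
    assert (Kneg : K < 0) by nra.
    nra.
Qed.

End SL2Lift.

Theorem mainTheorem8 (A : R -> R) (HA : in_SL2tilde_plus A)
  (a b : R) (Hab : a < b) (Ha : A a = a) (Hb : A b = b)
  (HU : forall x, a < x < b -> A x > x) :
  forall a' b' : R, a' < b' -> A a' = a' -> A b' = b' ->
    (forall x, a' < x < b' -> A x > x) ->
    (exists k : Z, a' = a + IZR k * PI /\ b' = b + IZR k * PI) /\
    quotient_iso A a b a' b'.
Proof.
  intros a' b' Hab' Ha' Hb' HU'.
  destruct HA as [[[_ [_ [_ [Hsmooth _]]]] [p [q [r [s Hlift]]]]] _].
  pose proof (smooth_continuity A Hsmooth) as Hcont.
  assert (Hshift : forall (k : Z) x, A (x + IZR k * PI) = A x + IZR k * PI).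
  { apply translate_Z_multiple, (lift_shift_PI A p q r s Hlift Hcont a Ha). }
  destruct (exists_Z_translate_into PI a a' PI_RGT_0) as [k Hk].
  destruct (positive_interval_unique_mod_PI A p q r s Hlift Hcont a b
              (a' + IZR k * PI) (b' + IZR k * PI)) as [Ea Eb].
  - repeat split; assumption.
  - apply positive_interval_translate; [apply Hshift | repeat split; assumption].
  - exact Hk.
  - replace a' with (a + IZR (- k) * PI) by (rewrite opp_IZR; lra).
    replace b' with (b + IZR (- k) * PI) by (rewrite opp_IZR; lra).
    split; [now exists (- k)%Z | apply quotient_iso_translate, Hshift].
Qed.
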